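(* Let $n\ge1$, $\mathbf{x},\mathbf{x}'\in\mathbb{R}^n$, let $P$ be the cyclic shift matrix ($P\mathbf{v}=[v_n,v_1,\ldots,v_{n-1}]^T$), let $h:\mathbb{R}\to\mathbb{R}$, and let $\kappa$ be the radial basis function kernel $\kappa(\mathbf{u},\mathbf{v})=h(\|\mathbf{u}-\mathbf{v}\|^2)$. Define $\mathbf{k}^{\mathbf{xx}'}\in\mathbb{R}^n$ by $k^{\mathbf{xx}'}_i=\kappa(\mathbf{x}',P^{i-1}\mathbf{x})$. Then $$\mathbf{k}^{\mathbf{xx}'}=h\!\left(\|\mathbf{x}\|^2+\|\mathbf{x}'\|^2-2\,\mathcal{F}^{-1}\left(\hat{\mathbf{x}}^{*}\odot\hat{\mathbf{x}}'\right)\right),$$ with $h$ applied element-wise and the scalars added to every entry. In particular, for the Gaussian kernel $\kappa(\mathbf{u},\mathbf{v})=\exp\left(-\frac{1}{\sigma^2}\|\mathbf{u}-\mathbf{v}\|^2\right)$ ($\sigma>0$), $\mathbf{k}^{\mathbf{xx}'}=\exp\left(-\frac{1}{\sigma^2}\left(\|\mathbf{x}\|^2+\|\mathbf{x}'\|^2-2\mathcal{F}^{-1}(\hat{\mathbf{x}}^{*}\odot\hat{\mathbf{x}}')\right)\right)$.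
   Context: For $\mathbf{v}\in\mathbb{C}^n$, $\hat{\mathbf{v}}=\mathcal{F}(\mathbf{v})$ is the discrete Fourier transform, $\hat{v}_k=\sum_{j=1}^n v_j e^{-2\pi \mathrm{i}(j-1)(k-1)/n}$, and $\mathcal{F}^{-1}$ is its inverse. $^{*}$ denotes element-wise complex conjugation and $\odot$ element-wise product; $\|\cdot\|$ is the Euclidean norm. *)

From HB Require Import structures.
From mathcomp Require Import all_boot all_order all_algebra.
From mathcomp Require Import all_classical all_reals all_analysis.
From mathcomp Require Import complex.
Set Implicit Arguments. Unset Strict Implicit. Unset Printing Implicit Defensive.
Import Order.TTheory GRing.Theory Num.Theory.
Local Open Scope ring_scope.
Local Open Scope complex_scope.

Section Defs.
Variable R : realType.
Variable n : nat.

Definition sqnorm (v : 'cV[R]_n) : R := \sum_(i < n) v i 0 ^+ 2.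

(* cyclic shift P v = [v_n, v_1, ..., v_{n-1}]^T (0-based: (P v)_i = v_{i-1 mod n}) *)
Definition cshift (v : 'cV[R]_n) : 'cV[R]_n := \col_i v (ord_pred i) 0.

Definition rbf_kernel (h : R -> R) (u v : 'cV[R]_n) : R := h (sqnorm (u - v)).

(* k^{xx'}_i = kappa(x', P^{i-1} x), 1-based i; here i : 'I_n is 0-based,
   so entry i is kappa(x', P^i x) *)
Definition kvec (h : R -> R) (x x' : 'cV[R]_n) : 'cV[R]_n :=
  \col_(i < n) rbf_kernel h x' (iter i cshift x).

Definition expi (t : R) : R[i] := (cos t +i* sin t)%C.

Definition dft (v : 'cV[R[i]]_n) : 'cV[R[i]]_n :=
  \col_(k < n) \sum_(j < n) v j 0 * expi (- (2 * pi * (j%:R * k%:R) / n%:R)).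

Definition idft (w : 'cV[R[i]]_n) : 'cV[R[i]]_n :=
  \col_(j < n) (n%:R^-1 * \sum_(k < n) w k 0 * expi (2 * pi * (j%:R * k%:R) / n%:R)).

Definition cvec (v : 'cV[R]_n) : 'cV[R[i]]_n := \col_i ((v i 0)%:C)%C.

Definition cconj (v : 'cV[R[i]]_n) : 'cV[R[i]]_n := \col_i (v i 0)^*.
Definition hadamard (v w : 'cV[R[i]]_n) : 'cV[R[i]]_n := \col_i (v i 0 * w i 0).

End Defs.

(* The vector c := F^{-1}(conj(F x) .* F x') is the circular cross-correlation
   c_i = sum_j x_j x'_{j+i}: expanding both transforms and summing over the
   frequency k, orthogonality of the powers of the primitive n-th root of unity
   w = e^{2 pi i/n} keeps exactly the terms whose indices differ by i. On the
   other side, (P^i x)_{j+i} = x_j, so expanding the square gives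
   ||x' - P^i x||^2 = ||x||^2 + ||x'||^2 - 2 c_i, and h is applied to that. *)
From HB Require Import structures.
From mathcomp Require Import all_boot all_order all_algebra.
From mathcomp Require Import all_classical all_reals all_analysis.
From mathcomp Require Import complex.
From mathcomp Require Import ring zify.
Import Order.TTheory GRing.Theory Num.Theory.
Local Open Scope ring_scope.
Local Open Scope complex_scope.

Lemma sum_expr_prim_root {F : idomainType} {n : nat} (m : nat) {z : F} :
  n.-primitive_root z ->
  \sum_(k < n) z ^+ (k * m) = if (n %| m)%N then n%:R else 0.
Proof.
move=> prim_z; under eq_bigr => k _ do rewrite mulnC exprM.
rewrite (prim_order_dvd prim_z); case: eqP => [-> | zm_neq1].
  by under eq_bigr => k _ do rewrite expr1n; rewrite sumr_const card_ord.
have := subrX1 (z ^+ m) n.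
rewrite -exprM mulnC exprM (prim_expr_order prim_z) expr1n subrr => /esym/eqP.
by rewrite mulf_eq0 subr_eq0 => /orP[/eqP // | /eqP].
Qed.

Lemma modn_predDS (n a : nat) :
  (0 < n)%N -> ((a.+1 %% n + n).-1 %% n = a %% n)%N.
Proof. by case: n => // n _; rewrite addnS /= modnDml addSnnS modnDr. Qed.

Section Expi.
Variable R : realType.

Lemma expi0 : expi (0 : R) = 1.
Proof. by rewrite /expi cos0 sin0. Qed.

Lemma expiD (a b : R) : expi (a + b) = expi a * expi b.
Proof. by rewrite /expi cosD sinD; simpc; congr Complex; ring. Qed.

Lemma expiMn (m : nat) (t : R) : expi (m%:R * t) = expi t ^+ m.
Proof.
elim: m => [|m IHm]; first by rewrite mul0r expi0.
by rewrite -addn1 natrD mulrDl mul1r expiD IHm exprD.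
Qed.

Lemma conjc_expi (t : R) : (expi t)^* = expi (- t).
Proof. by rewrite /expi cosN sinN. Qed.

Lemma expi2pi : expi (pi *+ 2 : R) = 1.
Proof. by rewrite /expi cos2pi sin2pi. Qed.

Lemma expi_neq1 (t : R) : 0 < t < pi *+ 2 -> expi t != 1.
Proof.
move=> /andP[t_gt0 t_lt2pi]; apply/negP => /eqP [cos_t1 _].
have pi_gt0 := @pi_gt0 R.
have zero_in : (0 : R) \in `[0, pi] by rewrite in_itv /= lexx ltW.
have [t_le_pi | pi_lt_t] := leP t pi.
  have t_in : t \in `[0, pi] by rewrite in_itv /= ltW.
  have := cos_inj t_in zero_in; rewrite cos_t1 cos0 => /(_ erefl) t0.
  by move: t_gt0; rewrite t0 ltxx.
have t'_in : pi *+ 2 - t \in `[0, pi].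
  by rewrite in_itv /= subr_ge0 ltW //= lerBlDr mulr2n lerD2l ltW.
have := cos_inj t'_in zero_in.
rewrite cos0 cosB cos2pi sin2pi cos_t1 mul0r mulr1 addr0 => /(_ erefl) /eqP.
by rewrite subr_eq0 => /eqP t2pi; move: t_lt2pi; rewrite t2pi ltxx.
Qed.

End Expi.

Section CircularCorrelation.
Variables (R : realType) (n : nat).
Hypothesis n_gt0 : (0 < n)%N.

Local Notation w := (expi (2 * pi / n%:R : R)).

Lemma prim_root_expi : n.-primitive_root w.
Proof.
apply/andP; split=> //; apply/forallP => i; rewrite unity_rootE -expiMn.
have n_neq0 : (n%:R : R) != 0 by rewrite pnatr_eq0 -lt0n.
have [i1_eq_n | i1_neq_n] := eqVneq i.+1 n.
  rewrite i1_eq_n eqb_id -(expi2pi R); apply/eqP; congr expi.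
  by rewrite mulr2n; field.
apply/eqP/negbTE/expi_neq1.
have i1_lt_n : (i.+1 < n)%N by rewrite ltn_neqAle i1_neq_n ltn_ord.
have -> : i.+1%:R * (2 * pi / n%:R) = (pi *+ 2 : R) * (i.+1%:R / n%:R).
  by rewrite mulr2n; field.
have twopi_gt0 : 0 < (pi *+ 2 : R) by rewrite mulrn_wgt0 ?pi_gt0.
rewrite mulr_gt0 ?divr_gt0 ?ltr0n //= gtr_pMr //.
by rewrite ltr_pdivrMr ?ltr0n // mul1r ltr_nat.
Qed.

Lemma expi_dftE (j k : nat) :
  expi (2 * pi * (j%:R * k%:R) / n%:R) = w ^+ (j * k).
Proof. by rewrite -expiMn natrM; congr expi; ring. Qed.

(* Since w ^+ n = 1, the inverse of w is w ^+ n.-1; this keeps all exponents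
   natural. *)
Lemma expi_dftNE (j k : nat) :
  expi (- (2 * pi * (j%:R * k%:R) / n%:R)) = w ^+ (n.-1 * (j * k)).
Proof.
have w_inv : expi (- (2 * pi / n%:R)) = w ^+ n.-1.
  rewrite -[LHS]mulr1 -(prim_expr_order prim_root_expi) -(prednK n_gt0).
  by rewrite exprS mulrA -expiD addNr expi0 mul1r.
by rewrite exprM -w_inv -expiMn natrM; congr expi; ring.
Qed.

Lemma dft_cvecE (x : 'cV[R]_n) (k : 'I_n) :
  dft (cvec x) k 0 = \sum_(j < n) (x j 0)%:C * w ^+ (n.-1 * (j * k)).
Proof. by rewrite mxE; apply: eq_bigr => j _; rewrite mxE expi_dftNE. Qed.

Lemma conjc_dft_cvecE (x : 'cV[R]_n) (k : 'I_n) :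
  (dft (cvec x) k 0)^* = \sum_(j < n) (x j 0)%:C * w ^+ (j * k).
Proof.
rewrite mxE rmorph_sum; apply: eq_bigr => j _.
rewrite mxE rmorphM [X in X * _]conjc_real [X in _ * X]conjc_expi opprK.
by rewrite expi_dftE.
Qed.

Definition rot (i j : 'I_n) : 'I_n := Ordinal (ltn_pmod (j + i) n_gt0).

Lemma rot_inj (i : 'I_n) : injective (rot i).
Proof.
move=> a b /(congr1 val) /= /eqP; rewrite eqn_modDr !modn_small // => /eqP.
exact: val_inj.
Qed.

Definition cross_corr (x x' : 'cV[R]_n) (i : 'I_n) : R :=
  \sum_(j < n) x j 0 * x' (rot i j) 0.

Lemma dvdn_corr_exponent (i j l : 'I_n) :
  (n %| j + i + n.-1 * l)%N = (l == rot i j).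
Proof.
have shift_l : (j + i + n.-1 * l + l = j + i + l * n)%N.
  by rewrite -addnA -mulSnr prednK // mulnC.
rewrite /dvdn -(mod0n n) -(eqn_modDr l) shift_l add0n addnC modnMDl.
by rewrite -(inj_eq val_inj) /= (modn_small (ltn_ord l)) eq_sym.
Qed.

Lemma sum_expi_corr (i j l : 'I_n) :
  \sum_(k < n) w ^+ (k * (j + i + n.-1 * l)) = if l == rot i j then n%:R else 0.
Proof. by rewrite (sum_expr_prim_root _ prim_root_expi) dvdn_corr_exponent. Qed.

Lemma idft_corrE (x x' : 'cV[R]_n) (i : 'I_n) :
  idft (hadamard (cconj (dft (cvec x))) (dft (cvec x'))) i 0 =
  (cross_corr x x' i)%:C.
Proof.
have frequency_term (k : 'I_n) :
    hadamard (cconj (dft (cvec x))) (dft (cvec x')) k 0 *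
      expi (2 * pi * (i%:R * k%:R) / n%:R) =
    \sum_(j < n) \sum_(l < n)
      (x j 0)%:C * (x' l 0)%:C * w ^+ (k * (j + i + n.-1 * l)).
  rewrite mxE [cconj _ _ _]mxE conjc_dft_cvecE dft_cvecE expi_dftE.
  rewrite big_distrl /= big_distrl /=.
  apply: eq_bigr => j _; rewrite big_distrr /= big_distrl /=.
  apply: eq_bigr => l _; rewrite -!mulrA; congr (_ * _).
  by rewrite mulrCA -!exprD; congr (_ * _ ^+ _); nia.
have collapse (j : 'I_n) :
    \sum_(l < n) \sum_(k < n)
      (x j 0)%:C * (x' l 0)%:C * w ^+ (k * (j + i + n.-1 * l)) =
    (x j 0)%:C * (x' (rot i j) 0)%:C * n%:R.
  under eq_bigr => l _ do rewrite -big_distrr sum_expi_corr.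
  rewrite (bigD1 (rot i j)) //= eqxx big1 ?addr0 // => l /negbTE ->.
  by rewrite mulr0.
have n_neq0 : (n%:R : R[i]) != 0 by rewrite pnatr_eq0 -lt0n.
rewrite mxE; under eq_bigr => k _ do rewrite frequency_term.
rewrite exchange_big; under eq_bigr => j _ do rewrite exchange_big collapse.
rewrite -big_distrl /= mulrCA mulVf // mulr1 rmorph_sum.
by apply: eq_bigr => j _; rewrite rmorphM.
Qed.

Lemma iter_cshiftE (m : nat) (x : 'cV[R]_n) (k j : 'I_n) :
  ((k + m) %% n)%N = j -> iter m (@cshift R n) x j 0 = x k 0.
Proof.
elim: m j => [|m IHm] j /=.
  by rewrite addn0 modn_small // => kj; congr (x _ 0); apply: val_inj.
move=> kmj; rewrite mxE; apply: IHm => /=.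
by rewrite -kmj addnS modn_predDS.
Qed.

Lemma sqnorm_sub_iter_cshift (x x' : 'cV[R]_n) (i : 'I_n) :
  sqnorm (x' - iter i (@cshift R n) x) =
  sqnorm x + sqnorm x' - 2 * cross_corr x x' i.
Proof.
rewrite /sqnorm /cross_corr [LHS](reindex_inj (rot_inj i)) /=.
under eq_bigr => k _ do rewrite !mxE (@iter_cshiftE _ _ k) //.
rewrite [in X in _ + X - _](reindex_inj (rot_inj i)) /=.
rewrite mulr_sumr -big_split -sumrB /=.
by apply: eq_bigr => k _; ring.
Qed.

End CircularCorrelation.

Theorem mainTheorem4 (R : realType) (n : nat) (hn : (0 < n)%N) (x x' : 'cV[R]_n) :
  let c := idft (hadamard (cconj (dft (cvec x))) (dft (cvec x'))) in
  (forall (h : R -> R) (i : 'I_n),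
     exists r : R, c i 0 = (r%:C)%C /\
       kvec h x x' i 0 = h (sqnorm x + sqnorm x' - 2 * r)) /\
  (forall (sigma : R), 0 < sigma -> forall i : 'I_n,
     exists r : R, c i 0 = (r%:C)%C /\
       kvec (fun t => expR (- (sigma ^+ 2)^-1 * t)) x x' i 0 =
         expR (- (sigma ^+ 2)^-1 * (sqnorm x + sqnorm x' - 2 * r))).
Proof.
move=> c.
have rbf_corr (h : R -> R) (i : 'I_n) :
    exists r : R, c i 0 = r%:C /\
      kvec h x x' i 0 = h (sqnorm x + sqnorm x' - 2 * r).
  exists (@cross_corr R n hn x x' i); split; first exact: idft_corrE.
  by rewrite mxE /rbf_kernel sqnorm_sub_iter_cshift.
by split=> [|sigma _]; apply: rbf_corr.
Qed.
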